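(* Let $\Omega$ be an algebraically closed field and let $C$ be a non-empty finite set of elements of $\Omega^\times$. Then there exist only finitely many inequivalent decompositions of the form $C=A_1\cdots A_k$ with each $\#A_i>1$.
   Context: For finite multisets $A,B$ of elements of $\Omega^\times$, $AB=\{ab:a\in A,b\in B\}$ denotes the multiset of pairwise products (and $A_1\cdots A_k$ is defined iteratively); for a single element $a$, $aB=\{a\}B$. Write $A\sim B$ if there is $\xi\in\Omega^\times$ with $\xi A=B$. Two decompositions $C=A_1\cdots A_k$ and $C=B_1\cdots B_l$ (equalities of multisets, the $A_i,B_j$ being finite multisets in $\Omega^\times$) are equivalent if $k=l$ and, after reordering, $A_i\sim B_i$ for every $i$. *)

(* Finite multisets are represented by sequences, compared up
   to permutation (perm_eq). *)
From HB Require Import structures.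
From mathcomp Require Import all_boot all_order all_algebra all_field.
Set Implicit Arguments. Unset Strict Implicit. Unset Printing Implicit Defensive.
Import GRing.Theory.
Local Open Scope ring_scope.

Definition in_units (F : fieldType) (A : seq F) : Prop := all (fun a => a != 0) A.

Definition mmul (F : fieldType) (A B : seq F) : seq F :=
  [seq a * b | a <- A, b <- B].

Definition mprod (F : fieldType) (As : seq (seq F)) : seq F :=
  match As with
  | [::] => [:: 1]
  | A :: rest => foldl (@mmul F) A rest
  end.

Definition msim (F : fieldType) (A B : seq F) : Prop :=
  exists xi : F, xi != 0 /\ perm_eq [seq xi * a | a <- A] B.

Definition dec_equiv (F : fieldType) (As Bs : seq (seq F)) : Prop :=
  exists Bs' : seq (seq F), perm_eq Bs Bs' /\ size As = size Bs' /\
    forall i, (i < size As)%N -> msim (nth [::] As i) (nth [::] Bs' i).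

Definition is_decomp (F : fieldType) (C : seq F) (As : seq (seq F)) : Prop :=
  (0 < size As)%N /\
  (forall A, A \in As -> in_units A /\ (1 < size A)%N) /\
  perm_eq C (mprod As).

(* Rescale every factor A_i with i >= 2 by the inverse of one of its elements
   and push the product of these scalars into A_1: this gives an equivalent
   decomposition in which A_2, ..., A_k all contain 1.  Then A_1 is contained
   in C and every other factor in C / C, while #C = #A_1 * ... * #A_k bounds
   both k (as 2^(k-1) <= #C) and every #A_i.  Hence these normalized
   decompositions all lie in one explicit finite list.  The argument works over
   any field. *)
From HB Require Import structures.
From mathcomp Require Import all_boot all_order all_algebra all_field.
Set Implicit Arguments. Unset Strict Implicit. Unset Printing Implicit Defensive.
Import GRing.Theory.
Local Open Scope ring_scope.

Fixpoint seqs_upto {T : Type} (S : seq T) (n : nat) : seq (seq T) :=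
  if n is n'.+1 then [::] :: [seq x :: s | x <- S, s <- seqs_upto S n']
  else [:: [::]].

Lemma mem_seqs_upto (T : eqType) (S : seq T) n s :
  (size s <= n)%N -> {subset s <= S} -> s \in seqs_upto S n.
Proof.
elim: n s => [|n IHn] [|x s] //= size_s sS.
rewrite inE; apply/orP; right.
apply: (allpairs_f cons); first exact/sS/mem_head.
by apply: IHn => // y ys; apply/sS; rewrite inE ys orbT.
Qed.

Section MultisetProducts.
Variable F : fieldType.
Implicit Types (A B R : seq F) (As rest : seq (seq F)).

Definition mscale (c : F) A : seq F := [seq c * x | x <- A].

Lemma mscale1 A : mscale 1 A = A.
Proof. by rewrite /mscale (eq_map (@mul1r _)) map_id. Qed.

Lemma mmul_mscale c d A B :
  mmul (mscale c A) (mscale d B) = mscale (c * d) (mmul A B).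
Proof.
rewrite /mmul /mscale; elim: A => [|a A IHA] //=; rewrite map_cat IHA.
by congr (_ ++ _); rewrite -!map_comp; apply: eq_map => b /=; rewrite mulrACA.
Qed.

Lemma foldl_mmul_mscale (f : seq F -> F) rest A c :
  foldl (@mmul F) (mscale c A) [seq mscale (f R) R | R <- rest] =
  mscale (c * \prod_(R <- rest) f R) (foldl (@mmul F) A rest).
Proof.
elim: rest A c => [|R rest IH] A c /=; first by rewrite big_nil mulr1.
by rewrite mmul_mscale IH big_cons mulrA.
Qed.

Lemma size_foldl_mmul A rest :
  size (foldl (@mmul F) A rest) = (size A * \prod_(R <- rest) size R)%N.
Proof.
elim: rest A => [|R rest IH] A /=; first by rewrite big_nil muln1.
by rewrite IH size_allpairs big_cons mulnA.
Qed.

Lemma size_mprod As : size (mprod As) = (\prod_(A <- As) size A)%N.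
Proof. by case: As => [|A rest]; rewrite ?big_nil ?big_cons ?size_foldl_mmul. Qed.

Lemma dvdn_size_mprod As A : A \in As -> (size A %| size (mprod As))%N.
Proof. by move=> AAs; rewrite size_mprod (big_rem A AAs) dvdn_mulr. Qed.

Lemma expn_size_mprod As :
  (forall A, A \in As -> 1 < size A)%N -> (2 ^ size As <= size (mprod As))%N.
Proof.
rewrite size_mprod; elim: As => [|A As IH] sizes_gt1; first by rewrite big_nil.
rewrite big_cons /= expnS leq_mul ?sizes_gt1 ?mem_head //.
by apply: IH => B BAs; rewrite sizes_gt1 // inE BAs orbT.
Qed.

Lemma foldl_mmul_sub A rest :
  (forall R, R \in rest -> 1 \in R) -> {subset A <= foldl (@mmul F) A rest}.
Proof.
elim: rest A => [|R rest IH] A one_in x xA //=.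
apply: IH => [R' R'rest|]; first by rewrite one_in // inE R'rest orbT.
by rewrite -[x]mulr1; apply: allpairs_f => //; rewrite one_in ?mem_head.
Qed.

Lemma mem_foldl_mmul A rest R x y :
  (forall R, R \in rest -> 1 \in R) -> x \in A -> R \in rest -> y \in R ->
  x * y \in foldl (@mmul F) A rest.
Proof.
move=> + xA Rrest; case/splitPr: Rrest => rest1 rest2 one_in yR.
have one_in1 R' : R' \in rest1 -> 1 \in R'.
  by move=> R'rest; rewrite one_in // mem_cat R'rest.
have one_in2 R' : R' \in rest2 -> 1 \in R'.
  by move=> R'rest; rewrite one_in // mem_cat inE R'rest !orbT.
rewrite foldl_cat /=; apply: foldl_mmul_sub => //.
exact/allpairs_f/yR/foldl_mmul_sub.
Qed.

Definition normal_form A rest : seq (seq F) :=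
  mscale (\prod_(R <- rest) head 0 R) A ::
  [seq mscale (head 0 R)^-1 R | R <- rest].

Section NormalForm.
Variables (A : seq F) (rest : seq (seq F)).
Hypothesis head_neq0 : forall R, R \in rest -> head 0 R != 0.

Lemma mprod_normal_form : mprod (normal_form A rest) = mprod (A :: rest).
Proof.
rewrite /= (foldl_mmul_mscale (fun R => (head 0 R)^-1)) -big_split /=.
by rewrite big1_seq ?mscale1 // => R /andP[_ /head_neq0 /mulfV].
Qed.

Lemma normal_form_equiv : dec_equiv (A :: rest) (normal_form A rest).
Proof.
exists (normal_form A rest); split=> //; split; first by rewrite /= size_map.
case=> [|i] /= lt_i.
  exists (\prod_(R <- rest) head 0 R); split=> //.
  by rewrite prodf_seq_neq0; apply/allP => R /head_neq0.
rewrite (nth_map [::]) //.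
by exists (head 0 (nth [::] rest i))^-1; rewrite invr_eq0 head_neq0 ?mem_nth.
Qed.

Lemma one_in_normal_form R : R \in behead (normal_form A rest) -> 1 \in R.
Proof.
case/mapP=> R' /head_neq0 + ->; case: R' => [|x R'] /=; first by rewrite eqxx.
by move=> x_neq0; rewrite -(mulVf x_neq0) mem_head.
Qed.

End NormalForm.

Lemma in_units_mscale c A : c != 0 -> in_units A -> in_units (mscale c A).
Proof.
move=> c_neq0 /allP A_neq0; rewrite /in_units all_map.
by apply/allP => x /A_neq0 x_neq0 /=; rewrite mulf_neq0.
Qed.

Lemma decomp_head_neq0 C A rest :
  is_decomp C (A :: rest) -> forall R, R \in rest -> head 0 R != 0.
Proof.
case=> _ [factors _] R Rrest.
have [] := factors R (mem_behead (s := A :: rest) Rrest).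
by case: R {Rrest} => [|x R'] //= /andP[].
Qed.

Lemma normal_form_decomp C A rest :
  is_decomp C (A :: rest) -> is_decomp C (normal_form A rest).
Proof.
move=> decomp; have head_neq0 := decomp_head_neq0 decomp.
case: decomp => _ [factors CE]; split=> //.
split; last by rewrite mprod_normal_form.
have [A_units A_gt1] := factors A (mem_head _ _).
move=> B; rewrite inE => /predU1P[->|/mapP[R Rrest ->]]; rewrite size_map.
  split=> //; apply: in_units_mscale => //.
  by rewrite prodf_seq_neq0; apply/allP => R /head_neq0.
have [R_units R_gt1] := factors R (mem_behead (s := A :: rest) Rrest).
by split=> //; apply: in_units_mscale; rewrite ?invr_eq0 ?head_neq0.
Qed.

Definition normal_candidates (C : seq F) : seq (seq (seq F)) :=
  seqs_upto (seqs_upto (C ++ [seq c / d | c <- C, d <- C]) (size C)) (size C).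

Lemma normal_decomp_in_candidates C A rest :
  is_decomp C (A :: rest) -> (forall R, R \in rest -> 1 \in R) ->
  A :: rest \in normal_candidates C.
Proof.
case=> _ [factors CE] one_in.
have size_C : size (mprod (A :: rest)) = size C by rewrite (perm_size CE).
have in_C x : x \in mprod (A :: rest) -> x \in C by rewrite (perm_mem CE).
have sizes_gt1 B : B \in A :: rest -> (1 < size B)%N by case/factors.
have size_C_gt_pow := expn_size_mprod sizes_gt1.
rewrite size_C in size_C_gt_pow.
apply: mem_seqs_upto => [|B BAs].
  exact: leq_trans (ltnW (ltn_expl _ (isT : 1 < 2)%N)) size_C_gt_pow.
apply: mem_seqs_upto => [|y yB]; rewrite ?mem_cat.
  rewrite -size_C dvdn_leq ?dvdn_size_mprod //.
  by rewrite size_C (leq_trans _ size_C_gt_pow) ?expn_gt0.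
move: BAs yB; rewrite inE => /predU1P[-> yA|Brest yB].
  by rewrite in_C // foldl_mmul_sub.
have [A_units A_gt1] := factors A (mem_head _ _).
have aA : nth 0 A 0 \in A by rewrite mem_nth // ltnW.
rewrite -[y](mulfK (allP A_units _ aA)) (mulrC y); apply/orP; right.
apply: allpairs_f; apply: in_C; first exact: mem_foldl_mmul one_in aA Brest yB.
exact: foldl_mmul_sub.
Qed.

End MultisetProducts.

Theorem lemma4p3 (Omega : closedFieldType) (C : seq Omega) :
  C != [::] -> uniq C -> in_units C ->
  exists Ds : seq (seq (seq Omega)),
    forall As : seq (seq Omega), is_decomp C As ->
      exists2 Bs, Bs \in Ds & dec_equiv As Bs.
Proof.
move=> _ _ _; exists (normal_candidates C) => -[|A rest] decomp.
  by case: decomp.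
have head_neq0 := decomp_head_neq0 decomp.
exists (normal_form A rest); last exact: normal_form_equiv head_neq0.
apply: normal_decomp_in_candidates; first exact: normal_form_decomp.
exact: one_in_normal_form head_neq0.
Qed.
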